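(* Let $(X,G)$ be a minimal continuous action and $m\in\mathbb{N}$, $m\geq 2$. Then $(X,G)$ is $m$-equicontinuous if and only if $Q_m(X,G)\setminus\Delta^{(m)}(X)=\emptyset$.
   Context: $G$ is a locally compact topological group acting continuously on a compact metric space $(X,d)$; minimal means every orbit is dense. $(X,G)$ is $m$-equicontinuous if for every $x\in X$ and $\varepsilon>0$ there is $\delta>0$ such that for any $x_1,\dots,x_m$ in the open ball $B_\delta(x)$ and every $g\in G$ there exist $i\neq j$ with $d(gx_i,gx_j)<\varepsilon$. A tuple $(x_1,\dots,x_m)\in X^m$ is $m$-regionally proximal if for each $\varepsilon>0$ there exist $x_1',\dots,x_m'\in X$ with $d(x_i,x_i')<\varepsilon$ for all $i$, and $g\in G$ with $d(gx_i',gx_j')<\varepsilon$ for all $i,j$; $Q_m(X,G)$ is the set of such tuples. $\Delta^{(m)}(X)=\{(x_1,\dots,x_m)\in X^m: x_i=x_j$ for some $i\neq j\}$. *)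

From HB Require Import structures.
From mathcomp Require Import all_boot all_order all_algebra.
From mathcomp Require Import all_classical all_reals all_analysis.
Set Implicit Arguments. Unset Strict Implicit. Unset Printing Implicit Defensive.
Import Order.TTheory GRing.Theory Num.Theory.
Local Open Scope classical_set_scope.
Local Open Scope ring_scope.

Definition is_topological_group (G : topologicalType)
    (mul : G -> G -> G) (inv : G -> G) (e : G) : Prop :=
  [/\ (forall a b c, mul a (mul b c) = mul (mul a b) c),
      (forall a, mul e a = a),
      (forall a, mul (inv a) a = e),
      continuous (fun p : G * G => mul p.1 p.2)
    & continuous inv].

Definition is_locally_compact_group (G : topologicalType)
    (mul : G -> G -> G) (inv : G -> G) (e : G) : Prop :=
  is_topological_group mul inv e /\ locally_compact [set: G].

Definition is_continuous_action (G X : topologicalType)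
    (mul : G -> G -> G) (e : G) (act : G -> X -> X) : Prop :=
  [/\ (forall x, act e x = x),
      (forall g h x, act (mul g h) x = act g (act h x))
    & continuous (fun p : G * X => act p.1 p.2)].

Definition minimal_action (G X : topologicalType) (act : G -> X -> X) : Prop :=
  forall x : X, closure [set act g x | g in [set: G]] = [set: X].

Definition m_equicontinuous {R : realType} (G : Type) (X : metricType R)
    (act : G -> X -> X) (m : nat) : Prop :=
  forall (x : X) (eps : R), 0 < eps ->
  exists2 delta : R, 0 < delta &
    forall xs : 'I_m -> X, (forall i, mdist x (xs i) < delta) ->
    forall g : G, exists i j : 'I_m, i != j /\ mdist (act g (xs i)) (act g (xs j)) < eps.

Definition Q_m {R : realType} (G : Type) (X : metricType R)
    (act : G -> X -> X) (m : nat) : set ('I_m -> X) :=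
  [set xs | forall eps : R, 0 < eps ->
     exists xs' : 'I_m -> X,
       (forall i, mdist (xs i) (xs' i) < eps) /\
       exists g : G, forall i j, mdist (act g (xs' i)) (act g (xs' j)) < eps].

Definition Delta_m (X : Type) (m : nat) : set ('I_m -> X) :=
  [set xs | exists i j : 'I_m, i != j /\ xs i = xs j].
Arguments Delta_m : clear implicits.
Arguments Q_m {R G X} act m _.
Arguments m_equicontinuous {R G X} act m.
Arguments minimal_action {G X} act.
Arguments is_continuous_action {G X} mul e act.
Arguments is_locally_compact_group {G} mul inv e.

From HB Require Import structures.
From mathcomp Require Import all_boot all_order all_algebra.
From mathcomp Require Import all_classical all_reals all_analysis.
From mathcomp Require Import lra.
Import Order.TTheory GRing.Theory Num.Theory.
Local Open Scope classical_set_scope.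
Local Open Scope ring_scope.

(* Both directions are compactness arguments.
   If (x_i) is m-regionally proximal with coordinates at least s apart, pick
   for small eta a tuple x' eta-close to x and a g squeezing x' to diameter
   eta; the points g x'_0 cluster at some z.  Equicontinuity at z, applied
   with g^-1 to the tuple g x' lying near z, brings two coordinates of x'
   within s/2 of each other, which contradicts the separation of x.
   If m-equicontinuity fails at x for eps, then for every delta some g spreads
   a tuple of the delta-ball around x eps apart; these spread tuples cluster in
   X^m at a tuple z off the diagonal, and z is m-regionally proximal because
   g^-1 brings the spread tuples back near (x, ..., x). *)

Lemma compact_shrinking_cluster (R : realType) (T : topologicalType)
    (P : R -> set T) :
  compact [set: T] -> (forall e, 0 < e -> P e !=set0) ->
  (forall e1 e2, 0 < e1 -> e1 <= e2 -> P e1 `<=` P e2) ->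
  exists z : T, forall e U, 0 < e -> nbhs z U -> P e `&` U !=set0.
Proof.
move=> cT neP homoP.
pose F := filter_from [set e : R | 0 < e] P.
have PF : ProperFilter F.
  apply: filter_from_proper => //; apply: filter_from_filter.
    by exists 1; rewrite /= ltr01.
  move=> e1 e2 /= e10 e20; exists (Order.min e1 e2).
    by rewrite lt_min e10 e20.
  move=> t Pt; split; apply: homoP Pt;
    by rewrite ?lt_min ?e10 ?e20 ?ge_min ?lexx ?orbT.
have FT : F setT by exists 1; rewrite /= ?ltr01.
have [z [_ Fz]] := cT F PF FT.
by exists z => e U e0; apply: Fz; exists e.
Qed.

Lemma compact_prod_topology (I : eqType) (T : topologicalType) :
  compact [set: T] -> compact [set: prod_topology (fun _ : I => T)].
Proof.
move=> cT; have := @tychonoff I (fun=> T) (fun=> setT) (fun=> cT).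
by congr compact; apply/seteqP; split.
Qed.

Lemma nbhs_prod_topology_mdist {R : realType} {I : finType} {X : metricType R}
    (z : prod_topology (fun _ : I => X)) (e : R) :
  0 < e -> nbhs z [set t | forall i, mdist (z i) (t i) < e].
Proof.
move=> e0; apply: (@filter_forall _ I _ _ (nbhs_filter z)) => i.
have := @proj_continuous I (fun=> X) i z (ball (z i) e) (nbhsx_ballx _ _ e0).
by apply: (@filterS _ _ (nbhs_filter z)) => t; rewrite /= ballEmdist.
Qed.

Lemma metric_quadrangle {R : realType} {X : metricType R} (x x' y' y : X) :
  mdist x y <= mdist x x' + mdist x' y' + mdist y' y.
Proof.
apply: le_trans (metric_triangle x y' y) _; rewrite lerD2r.
exact: metric_triangle.
Qed.

Lemma notin_Delta_m_separated (R : realType) (X : metricType R) (m : nat)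
    (xs : 'I_m -> X) :
  ~ Delta_m X m xs ->
  exists2 s : R, 0 < s & forall i j, i != j -> s <= mdist (xs i) (xs j).
Proof.
move=> xsN.
exists (\big[Order.min/1]_(p | p.1 != p.2) mdist (xs p.1) (xs p.2)).
  apply: (big_ind (fun v : R => 0 < v)) => // [a b a0 b0|[i j] /= ij].
    by rewrite lt_min a0 b0.
  by rewrite mdist_gt0; apply/eqP => xij; apply: xsN; exists i, j.
by move=> i j ij; rewrite (bigD1 (i, j)) //= ge_min lexx.
Qed.

Section m_equicontinuity.
Variables (R : realType) (G : Type) (X : metricType R).
Variables (act : G -> X -> X) (ginv : G -> G) (m : nat).
Hypothesis actK : forall g, cancel (act g) (act (ginv g)).
Hypothesis compactX : compact [set: X].

Lemma Q_m_sub_Delta_m : (0 < m)%N ->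
  m_equicontinuous act m -> Q_m act m `<=` Delta_m X m.
Proof.
move=> m_gt0 equi xs xsQ.
apply: contrapT => /notin_Delta_m_separated[s s0 sep].
pose i0 := Ordinal m_gt0.
pose P eta := [set y | exists xs' g, [/\ forall i, mdist (xs i) (xs' i) < eta,
  forall i j, mdist (act g (xs' i)) (act g (xs' j)) < eta & y = act g (xs' i0)]].
have [z Pz] : exists z : X,
    forall eta U, 0 < eta -> nbhs z U -> P eta `&` U !=set0.
  apply: compact_shrinking_cluster => //.
    move=> eta eta0; have [xs' [xs'1 [g xs'2]]] := xsQ eta eta0.
    by exists (act g (xs' i0)), xs', g.
  move=> e1 e2 _ e12 _ [xs' [g [xs'1 xs'2 ->]]].
  exists xs', g; split=> [i|i j|//].
    exact: lt_le_trans (xs'1 i) e12.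
  exact: lt_le_trans (xs'2 i j) e12.
have [delta delta0 equiz] := equi z (s / 2) (divr_gt0 s0 (ltr0Sn _ 1)).
pose eta := Order.min (delta / 2) (s / 4).
have eta0 : 0 < eta by rewrite lt_min !divr_gt0.
have eta_delta : eta <= delta / 2 by rewrite ge_min lexx.
have eta_s : eta <= s / 4 by rewrite ge_min lexx orbT.
have [_ [[xs' [g [xs'1 xs'2 ->]]] zy]] := Pz eta _ eta0 (nbhsx_ballx z _ eta0).
rewrite /= ballEmdist /= in zy.
have near_z i : mdist z (act g (xs' i)) < delta.
  have := metric_triangle z (act g (xs' i0)) (act g (xs' i)).
  have := xs'2 i0 i; lra.
have [i [j [ij]]] := equiz _ near_z (ginv g); rewrite !actK => xs'ij.
have := metric_quadrangle (xs i) (xs' i) (xs' j) (xs j).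
rewrite (metric_sym (xs' j)); have := sep i j ij; have := xs'1 i; have := xs'1 j.
lra.
Qed.

Lemma m_equicontinuous_of_Q_m_sub_Delta_m :
  Q_m act m `<=` Delta_m X m -> m_equicontinuous act m.
Proof.
move=> QD x eps eps0; apply: contrapT => noneq.
pose P (d : R) := [set t : prod_topology (fun _ : 'I_m => X) | exists xs g, [/\
  forall i, mdist x (xs i) < d, t = act g \o xs &
  forall i j, i != j -> eps <= mdist (act g (xs i)) (act g (xs j))]].
have [z Pz] : exists z : prod_topology (fun _ : 'I_m => X),
    forall d U, 0 < d -> nbhs z U -> P d `&` U !=set0.
  apply: compact_shrinking_cluster => [||e1 e2 _ e12 _ [xs [g [xs1 -> xs2]]]].
  - exact: compact_prod_topology.
  - move=> d d0; apply: contrapT => noP; apply: noneq; exists d => // xs xs1 g.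
    apply: contrapT => far; apply: noP; exists (act g \o xs), xs, g; split => //.
    move=> i j ij; rewrite leNgt; apply/negP => near.
    by apply: far; exists i, j.
  - by exists xs, g; split => // i; exact: lt_le_trans (xs1 i) e12.
have near_z d : 0 < d -> exists xs g, [/\ forall i, mdist x (xs i) < d,
    forall i j, i != j -> eps <= mdist (act g (xs i)) (act g (xs j)) &
    forall i, mdist (z i) (act g (xs i)) < d].
  move=> d0; have [_ [[xs [g [xs1 -> xs2]]] zt]] :=
    Pz d _ d0 (nbhs_prod_topology_mdist z _ d0).
  by exists xs, g.
have zQ : Q_m act m z.
  move=> eta eta0.
  have [xs [g [xs1 _ zxs]]] := near_z _ (divr_gt0 eta0 (ltr0Sn _ 1)).
  exists (act g \o xs); split => [i|]; first by have := zxs i; lra.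
  exists (ginv g) => i j /=; rewrite !actK.
  have := metric_triangle (xs i) x (xs j); rewrite (metric_sym (xs i) x).
  have := xs1 i; have := xs1 j; lra.
have [i [j [ij zij]]] := QD z zQ.
have [xs [g [_ far zxs]]] := near_z _ (divr_gt0 eps0 (ltr0Sn _ 1)).
have := metric_quadrangle (act g (xs i)) (z i) (z j) (act g (xs j)).
rewrite zij mdistxx (metric_sym (act g (xs i)) (z j)).
have := far i j ij; have := zxs i; have := zxs j; rewrite zij; lra.
Qed.

End m_equicontinuity.

Theorem theorem4p6 (R : realType) (G : topologicalType)
    (mul : G -> G -> G) (inv : G -> G) (e : G)
    (X : metricType R) (act : G -> X -> X) (m : nat) :
  is_locally_compact_group mul inv e ->
  compact [set: X] ->
  is_continuous_action mul e act ->
  minimal_action act ->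
  (2 <= m)%N ->
  (m_equicontinuous act m <-> Q_m act m `\` Delta_m X m = set0).
Proof.
move=> [[_ _ mulVg _ _] _] compactX [act1 actM _] _ m_ge2.
have actK g : cancel (act g) (act (inv g)) by move=> x; rewrite -actM mulVg act1.
rewrite setD_eq0; split.
- exact: Q_m_sub_Delta_m actK compactX (ltnW m_ge2).
- exact: m_equicontinuous_of_Q_m_sub_Delta_m actK compactX.
Qed.
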